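(* Let $(\xi_n)_{n\geq1}$ be i.i.d. with $\mathbf{P}(\xi_1=1)=p=1-\mathbf{P}(\xi_1=-1)$, $p\in(0,1)$. For $x\geq1$ set $W_0:=x$, $B_1:=1$, $W_n:=W_{n-1}+\xi_nB_n$, $B_{n+1}:=B_n2^{\xi_n}$ for $n\geq1$, and $f(x,p):=\mathbf{P}(W_n\leq0\text{ for some }n)$. Define functions $f_n:\mathbb{R}\times(0,1)\to\mathbb{R}$ by $f_0(x,p):=\mathbf{1}_{(-\infty,2]}(x)$ and $$f_{n+1}(x,p)=p\,f_n\!\left(\tfrac{x+1}{2},p\right)+(1-p)\,f_n(2x-2,p),\qquad n\in\mathbb{N}.$$ Then for every $x>2$, $f_n(x,\cdot)\to f(x,\cdot)$ locally uniformly on $(0,1/2)$, and for every $p\in(0,1/2)$, $f_n(\cdot,p)\to f(\cdot,p)$ locally uniformly on $(2,\infty)$. In particular, $$f(x,p)=p\,f\!\left(\tfrac{x+1}{2},p\right)+(1-p)\,f(2x-2,p)\qquad\text{for all }(x,p)\in(2,\infty)\times(0,1/2).$$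
   Context: $f(x,p)$ is the ruin probability of a gambler with initial fortune $x$ who starts by betting $1$, doubles the bet after each win and halves it after each loss, winning each round independently with probability $p$. *)

From Stdlib Require Import Reals List.
From Coquelicot Require Import Coquelicot.
Open Scope R_scope.

(* A finite history of rounds: true = the gambler wins the round (xi = +1),
   false = the gambler loses it (xi = -1). *)

Fixpoint paths (N : nat) : list (list bool) :=
  match N with
  | O => nil :: nil
  | S n => map (cons true) (paths n) ++ map (cons false) (paths n)
  end.

Fixpoint path_weight (p : R) (s : list bool) : R :=
  match s with
  | nil => 1
  | e :: t => (if e then p else 1 - p) * path_weight p t
  end.

(* ruined w b s = true iff, starting from current fortune w = W_{k} and
   current bet b = B_{k+1}, and playing the rounds s, the fortune
   W_n := W_{n-1} + xi_n B_n  (with B_{n+1} := B_n 2^{xi_n})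
   becomes <= 0 at some step. *)
Fixpoint ruined (w b : R) (s : list bool) : bool :=
  match s with
  | nil => false
  | e :: t =>
      let w' := if e then w + b else w - b in
      let b' := if e then 2 * b else b / 2 in
      if Rle_dec w' 0 then true else ruined w' b' t
  end.

Definition ruin_prob_by (x p : R) (N : nat) : R :=
  fold_right Rplus 0
    (map (fun s => path_weight p s * (if ruined x 1 s then 1 else 0)) (paths N)).

(* f(x,p) = P(W_n <= 0 for some n) = lim_N P(W_n <= 0 for some n <= N)
   (continuity of the probability measure along the increasing events). *)
Definition ruin_f (x p : R) : R := real (Lim_seq (fun N => ruin_prob_by x p N)).

Fixpoint f_approx (n : nat) (x p : R) : R :=
  match n with
  | O => if Rle_dec x 2 then 1 else 0
  | S m => p * f_approx m ((x + 1) / 2) p + (1 - p) * f_approx m (2 * x - 2) p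
  end.

(* With T := step p, i.e. T g x = p g((x+1)/2) + (1-p) g(2x-2), we have
   f_n = T^n 1_(-oo,2].  Renormalising the bet to 1 after each round shows that the
   probability r_n of ruin within n rounds satisfies r_(n+1) = T (r_n set to 1 on
   (-oo,0]).  Since (-oo,2] is closed under both moves and from there a win followed by
   two losses ruins, r_n <= f_n <= r_(n+3j) + (1 - p(1-p)^2)^j, so f_n -> f pointwise,
   which yields the functional equation.
   For uniformity, fix [a,b] in (0,1/2).  For some t > 0 depending only on b, the function
   psi = min(1, ((y-1)/(L-1))^(-t)) is T-superharmonic for all large L.  Hence f_m <= psi
   is small beyond some M, and so is T^n 1_(2,M] beyond some M' >= M.  Then
   f_(N+m) - f_N = T^N (f_m - f_0) is at most a small error plus the probability of
   staying in (2,M'] for N rounds, which decays like (1 - a^k)^(N/k) because k wins in a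
   row leave that window through (-oo,2]. *)

From Stdlib Require Import Reals Lra Lia Psatz List.
From Coquelicot Require Import Coquelicot.
Open Scope R_scope.

Definition step (p : R) (g : R -> R) (x : R) : R :=
  p * g ((x + 1) / 2) + (1 - p) * g (2 * x - 2).

Fixpoint iter_step (p : R) (n : nat) (g : R -> R) : R -> R :=
  match n with
  | O => g
  | S m => step p (iter_step p m g)
  end.

Lemma step_plus_const p g c x : step p (fun y => g y + c) x = step p g x + c.
Proof. unfold step; ring. Qed.

Lemma iter_step_plus p n g h x :
  iter_step p n (fun y => g y + h y) x = iter_step p n g x + iter_step p n h x.
Proof.
  revert x; induction n as [|n IH]; intros x; [reflexivity|].
  cbn [iter_step]; unfold step; rewrite !IH; ring.
Qed.

Lemma iter_step_const p n c x : iter_step p n (fun _ => c) x = c.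
Proof.
  revert x; induction n as [|n IH]; intros x; [reflexivity|].
  cbn [iter_step]; unfold step; rewrite !IH; ring.
Qed.

Lemma iter_step_low p n g c x :
  (forall y, y <= 2 -> g y = c) -> x <= 2 -> iter_step p n g x = c.
Proof.
  intros Hg; revert x; induction n as [|n IH]; intros x Hx; [auto|].
  cbn [iter_step]; unfold step; rewrite !IH by lra; ring.
Qed.

Section Monotone.
Variable p : R.
Hypothesis Hp : 0 <= p <= 1.

Lemma step_le g h x : (forall y, g y <= h y) -> step p g x <= step p h x.
Proof.
  intros Hgh; unfold step.
  pose proof (Hgh ((x + 1) / 2)); pose proof (Hgh (2 * x - 2)); nra.
Qed.

Lemma iter_step_le n g h x :
  (forall y, g y <= h y) -> iter_step p n g x <= iter_step p n h x.
Proof.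
  intros Hgh; revert x; induction n as [|n IH]; intros x; [auto|].
  apply step_le; exact IH.
Qed.

Lemma iter_step_le_super n g psi x :
  (forall y, g y <= psi y) -> (forall y, step p psi y <= psi y) ->
  iter_step p n g x <= psi x.
Proof.
  intros Hg Hpsi; revert x; induction n as [|n IH]; intros x; [auto|].
  eapply Rle_trans; [apply step_le, IH | apply Hpsi].
Qed.

Lemma iter_step_bounds n g x :
  (forall y, 0 <= g y <= 1) -> 0 <= iter_step p n g x <= 1.
Proof.
  intros Hg; split.
  - rewrite <- (iter_step_const p n 0 x); apply iter_step_le; apply Hg.
  - rewrite <- (iter_step_const p n 1 x); apply iter_step_le; apply Hg.
Qed.

End Monotone.

Lemma f_approx_iter n m x p :
  f_approx (n + m) x p = iter_step p n (fun y => f_approx m y p) x.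
Proof.
  revert x; induction n as [|n IH]; intros x; [reflexivity|].
  cbn [f_approx iter_step Nat.add]; unfold step; rewrite !IH; reflexivity.
Qed.

Lemma f_approx_iter0 n x p :
  f_approx n x p = iter_step p n (fun y => f_approx 0 y p) x.
Proof. rewrite <- f_approx_iter, Nat.add_0_r; reflexivity. Qed.

Lemma f_approx_low n x p : x <= 2 -> f_approx n x p = 1.
Proof.
  intros Hx; rewrite f_approx_iter0; apply iter_step_low; [|exact Hx].
  intros y Hy; cbn; destruct (Rle_dec y 2); lra.
Qed.

Lemma f_approx_bounds n x p : 0 <= p <= 1 -> 0 <= f_approx n x p <= 1.
Proof.
  intros Hp; rewrite f_approx_iter0; apply iter_step_bounds; [exact Hp|].
  intros y; cbn; destruct (Rle_dec y 2); lra.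
Qed.

Lemma sum_app (l1 l2 : list R) :
  fold_right Rplus 0 (l1 ++ l2) = fold_right Rplus 0 l1 + fold_right Rplus 0 l2.
Proof. induction l1 as [|a l1 IH]; simpl; [ring | rewrite IH; ring]. Qed.

Lemma sum_map_scale {A : Type} (c : R) (g : A -> R) (l : list A) :
  fold_right Rplus 0 (map (fun a => c * g a) l) = c * fold_right Rplus 0 (map g l).
Proof. induction l as [|a l IH]; simpl; [ring | rewrite IH; ring]. Qed.

Definition path_prob (P : list bool -> bool) (p : R) (n : nat) : R :=
  fold_right Rplus 0
    (map (fun s => path_weight p s * (if P s then 1 else 0)) (paths n)).

Lemma path_prob_ext P Q p n : (forall s, P s = Q s) -> path_prob P p n = path_prob Q p n.
Proof.
  intros HPQ; unfold path_prob; f_equal; apply map_ext; intros s; rewrite HPQ; reflexivity.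
Qed.

Lemma path_prob_S P p n :
  path_prob P p (S n) =
  p * path_prob (fun s => P (true :: s)) p n + (1 - p) * path_prob (fun s => P (false :: s)) p n.
Proof.
  unfold path_prob; cbn [paths]; rewrite map_app, sum_app, !map_map.
  rewrite <- !sum_map_scale; f_equal; f_equal; apply map_ext; intros s; cbn; ring.
Qed.

Lemma path_prob_true p n : path_prob (fun _ => true) p n = 1.
Proof.
  induction n as [|n IH]; [cbn; ring|].
  rewrite path_prob_S, IH; ring.
Qed.

Lemma ruined_scale s : forall w b c, 0 < c -> ruined (c * w) (c * b) s = ruined w b s.
Proof.
  induction s as [|e t IH]; intros w b c Hc; [reflexivity|].
  destruct e; cbn.
  - replace (c * w + c * b) with (c * (w + b)) by ring.
    replace (2 * (c * b)) with (c * (2 * b)) by ring.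
    rewrite IH by exact Hc.
    destruct (Rle_dec (c * (w + b)) 0), (Rle_dec (w + b) 0); auto; exfalso; nra.
  - replace (c * w - c * b) with (c * (w - b)) by ring.
    replace (c * b / 2) with (c * (b / 2)) by field.
    rewrite IH by exact Hc.
    destruct (Rle_dec (c * (w - b)) 0), (Rle_dec (w - b) 0); auto; exfalso; nra.
Qed.

Lemma ruined_win w s :
  ruined w 1 (true :: s) = if Rle_dec ((w + 1) / 2) 0 then true else ruined ((w + 1) / 2) 1 s.
Proof.
  cbn; rewrite <- (ruined_scale s ((w + 1) / 2) 1 2) by lra.
  replace (2 * ((w + 1) / 2)) with (w + 1) by field.
  destruct (Rle_dec (w + 1) 0), (Rle_dec ((w + 1) / 2) 0); auto; lra.
Qed.

Lemma ruined_loss w s :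
  ruined w 1 (false :: s) = if Rle_dec (2 * w - 2) 0 then true else ruined (2 * w - 2) 1 s.
Proof.
  cbn; rewrite <- (ruined_scale s (2 * w - 2) 1 (/ 2)) by lra.
  replace (/ 2 * (2 * w - 2)) with (w - 1) by field.
  replace (/ 2 * 1) with (1 / 2) by field.
  destruct (Rle_dec (w - 1) 0), (Rle_dec (2 * w - 2) 0); auto; lra.
Qed.

Definition absorb (g : R -> R) (y : R) : R := if Rle_dec y 0 then 1 else g y.

Lemma ruin_prob_by_0 x p : ruin_prob_by x p 0 = 0.
Proof. cbn; ring. Qed.

Lemma ruin_prob_by_S x p n :
  ruin_prob_by x p (S n) = step p (absorb (fun y => ruin_prob_by y p n)) x.
Proof.
  change (ruin_prob_by x p (S n)) with (path_prob (ruined x 1) p (S n)).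
  rewrite path_prob_S; unfold step, absorb.
  rewrite (path_prob_ext _ _ _ _ (ruined_win x)), (path_prob_ext _ _ _ _ (ruined_loss x)).
  destruct (Rle_dec ((x + 1) / 2) 0), (Rle_dec (2 * x - 2) 0); rewrite ?path_prob_true;
    reflexivity.
Qed.

Section Ruin.
Variable p : R.
Hypothesis Hp : 0 < p < 1.

Lemma ruin_prob_by_bounds n x : 0 <= ruin_prob_by x p n <= 1.
Proof.
  revert x; induction n as [|n IH]; intros x; [rewrite ruin_prob_by_0; lra|].
  rewrite ruin_prob_by_S; apply (iter_step_bounds p ltac:(lra) 1).
  intros y; unfold absorb; destruct (Rle_dec y 0); [lra | apply IH].
Qed.

Lemma ruin_prob_by_le_S n x : ruin_prob_by x p n <= ruin_prob_by x p (S n).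
Proof.
  revert x; induction n as [|n IH]; intros x.
  - rewrite ruin_prob_by_0; apply ruin_prob_by_bounds.
  - rewrite !(ruin_prob_by_S x); apply step_le; [lra|].
    intros y; unfold absorb; destruct (Rle_dec y 0); [lra | apply IH].
Qed.

Lemma ruin_prob_by_le_f_approx n x : ruin_prob_by x p n <= f_approx n x p.
Proof.
  revert x; induction n as [|n IH]; intros x.
  - rewrite ruin_prob_by_0; apply f_approx_bounds; lra.
  - rewrite ruin_prob_by_S.
    change (f_approx (S n) x p) with (step p (fun y => f_approx n y p) x).
    apply step_le; [lra|]; intros y; unfold absorb; destruct (Rle_dec y 0).
    + rewrite f_approx_low by lra; lra.
    + apply IH.
Qed.

Lemma survival_factor_bounds : 0 <= 1 - p * (1 - p) ^ 2 < 1.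
Proof. assert (0 < (1 - p) ^ 2 < 1) by (split; nra). split; nra. Qed.

Lemma survival_absorb g y B :
  0 <= B -> (0 < y -> 1 - g y <= B) -> 1 - absorb g y <= B.
Proof. intros HB Hg; unfold absorb; destruct (Rle_dec y 0); [lra | apply Hg; lra]. Qed.

Lemma survival_step n x B1 B2 : 0 <= B1 -> 0 <= B2 ->
  (0 < (x + 1) / 2 -> 1 - ruin_prob_by ((x + 1) / 2) p n <= B1) ->
  (0 < 2 * x - 2 -> 1 - ruin_prob_by (2 * x - 2) p n <= B2) ->
  1 - ruin_prob_by x p (S n) <= p * B1 + (1 - p) * B2.
Proof.
  intros HB1 HB2 H1 H2; rewrite ruin_prob_by_S; unfold step.
  pose proof (survival_absorb (fun y => ruin_prob_by y p n) _ _ HB1 H1).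
  pose proof (survival_absorb (fun y => ruin_prob_by y p n) _ _ HB2 H2).
  nra.
Qed.

Lemma survival_low_S n B : 0 <= B ->
  (forall y, y <= 2 -> 1 - ruin_prob_by y p n <= B) ->
  forall y, y <= 2 -> 1 - ruin_prob_by y p (S n) <= B.
Proof.
  intros HB Hn y Hy; replace B with (p * B + (1 - p) * B) by ring.
  apply survival_step; auto; intros _; apply Hn; lra.
Qed.

(* From any y <= 2, the moves win, loss, loss lead to ruin. *)
Lemma survival_low_contract n B : 0 <= B ->
  (forall y, y <= 2 -> 1 - ruin_prob_by y p n <= B) ->
  forall y, y <= 2 -> 1 - ruin_prob_by y p (3 + n) <= (1 - p * (1 - p) ^ 2) * B.
Proof.
  intros HB Hn.
  pose proof (survival_low_S n B HB Hn) as Hn1.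
  pose proof (survival_low_S (S n) B HB Hn1) as Hn2.
  assert (HpB : 0 <= p * B) by nra.
  assert (Hloss : forall y, y <= 1 -> 1 - ruin_prob_by y p (S n) <= p * B).
  { intros y Hy; replace (p * B) with (p * B + (1 - p) * 0) by ring.
    apply survival_step; auto; [lra | intros _; apply Hn; lra | lra]. }
  assert (Hwin_loss : forall y, y <= 3 / 2 ->
    1 - ruin_prob_by y p (S (S n)) <= p * B + (1 - p) * (p * B)).
  { intros y Hy; apply survival_step; auto; [intros _; apply Hn1; lra |].
    intros _; apply Hloss; lra. }
  intros y Hy.
  replace ((1 - p * (1 - p) ^ 2) * B) with (p * (p * B + (1 - p) * (p * B)) + (1 - p) * B)
    by ring.
  apply survival_step; [nra | lra | intros _; apply Hwin_loss; lra | intros _; apply Hn2; lra].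
Qed.

Lemma survival_low_geom j y :
  y <= 2 -> 1 - ruin_prob_by y p (3 * j) <= (1 - p * (1 - p) ^ 2) ^ j.
Proof.
  revert y; induction j as [|j IH]; intros y Hy.
  - rewrite ruin_prob_by_0; simpl; lra.
  - replace (3 * S j)%nat with (3 + 3 * j)%nat by lia.
    apply survival_low_contract; [apply pow_le, survival_factor_bounds | exact IH | exact Hy].
Qed.

Lemma f_approx_le_ruin_prob_by j n x :
  f_approx n x p <= ruin_prob_by x p (n + 3 * j) + (1 - p * (1 - p) ^ 2) ^ j.
Proof.
  assert (Hc : 0 <= (1 - p * (1 - p) ^ 2) ^ j) by apply pow_le, survival_factor_bounds.
  revert x; induction n as [|n IH]; intros x.
  - cbn [f_approx Nat.add]; destruct (Rle_dec x 2) as [Hx|Hx].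
    + pose proof (survival_low_geom j x Hx); lra.
    + pose proof (ruin_prob_by_bounds (3 * j) x); lra.
  - change (S n + 3 * j)%nat with (S (n + 3 * j)).
    change (f_approx (S n) x p) with (step p (fun y => f_approx n y p) x).
    rewrite ruin_prob_by_S, <- step_plus_const.
    apply step_le; [lra|]; intros y; unfold absorb.
    destruct (Rle_dec y 0); [rewrite f_approx_low by lra; lra | apply IH].
Qed.

Lemma ruin_prob_by_cvg x : is_lim_seq (fun n => ruin_prob_by x p n) (ruin_f x p).
Proof.
  apply Lim_seq_correct', (ex_finite_lim_seq_incr _ 1).
  - intros n; apply ruin_prob_by_le_S.
  - intros n; apply ruin_prob_by_bounds.
Qed.

Lemma f_approx_le_ruin_f n x : f_approx n x p <= ruin_f x p.
Proof.
  set (c := 1 - p * (1 - p) ^ 2).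
  assert (Hbound : forall j, f_approx n x p <= ruin_f x p + c ^ j).
  { intros j; eapply Rle_trans; [apply (f_approx_le_ruin_prob_by j)|].
    apply Rplus_le_compat_r, is_lim_seq_incr_compare; [apply ruin_prob_by_cvg |].
    intros m; apply ruin_prob_by_le_S. }
  assert (Hlim : is_lim_seq (fun j => ruin_f x p + c ^ j) (ruin_f x p + 0)).
  { apply is_lim_seq_plus'; [apply is_lim_seq_const | apply is_lim_seq_geom].
    pose proof survival_factor_bounds; unfold c; rewrite Rabs_pos_eq; lra. }
  pose proof (is_lim_seq_le _ _ _ _ Hbound (is_lim_seq_const _) Hlim) as Hle.
  simpl in Hle; lra.
Qed.

Lemma f_approx_cvg x : is_lim_seq (fun n => f_approx n x p) (ruin_f x p).
Proof.
  apply is_lim_seq_le_le with (u := fun n => ruin_prob_by x p n) (w := fun _ => ruin_f x p).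
  - intros n; split; [apply ruin_prob_by_le_f_approx | apply f_approx_le_ruin_f].
  - apply ruin_prob_by_cvg.
  - apply is_lim_seq_const.
Qed.

Lemma ruin_f_step x : ruin_f x p = step p (fun y => ruin_f y p) x.
Proof.
  pose proof (f_approx_cvg x) as H0; apply is_lim_seq_incr_1 in H0.
  pose proof (is_lim_seq_scal_l _ p _ (f_approx_cvg ((x + 1) / 2))) as Hwin.
  pose proof (is_lim_seq_scal_l _ (1 - p) _ (f_approx_cvg (2 * x - 2))) as Hloss.
  assert (H1 : is_lim_seq (fun n => f_approx (S n) x p) (step p (fun y => ruin_f y p) x))
    by exact (is_lim_seq_plus' _ _ _ _ Hwin Hloss).
  apply is_lim_seq_unique in H0, H1; rewrite H0 in H1; injection H1; auto.
Qed.

End Ruin.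

Lemma Rpower_pos x y : 0 < Rpower x y.
Proof. apply exp_pos. Qed.

Lemma Rpower_1_l z : Rpower 1 z = 1.
Proof. unfold Rpower; rewrite ln_1, Rmult_0_r; apply exp_0. Qed.

Lemma Rpower_div x y z : 0 < x -> 0 < y -> Rpower (x / y) z = Rpower x z / Rpower y z.
Proof.
  intros Hx Hy; unfold Rpower; rewrite ln_div by assumption.
  replace (z * (ln x - ln y)) with (z * ln x + - (z * ln y)) by ring.
  rewrite exp_plus, exp_Ropp; reflexivity.
Qed.

Lemma Rpower_div_opp x y z :
  0 < x -> 0 < y -> Rpower (x / y) (- z) = Rpower x (- z) * Rpower y z.
Proof.
  intros Hx Hy; rewrite Rpower_div, (Rpower_Ropp y) by assumption.
  unfold Rdiv; rewrite Rinv_inv; reflexivity.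
Qed.

Lemma Rpower_opp_le a b t : 0 <= t -> 0 < a <= b -> Rpower b (- t) <= Rpower a (- t).
Proof.
  intros Ht Hab; rewrite !Rpower_Ropp.
  apply Rinv_le_contravar; [apply Rpower_pos | apply Rle_Rpower_l; auto].
Qed.

Lemma Rpower_opp_le_1 a t : 0 <= t -> 1 <= a -> Rpower a (- t) <= 1.
Proof.
  intros Ht Ha; rewrite <- (Rpower_1_l (- t)); apply Rpower_opp_le; lra.
Qed.

Lemma Rpower_opp_ge_1 a t : 0 <= t -> 0 < a <= 1 -> 1 <= Rpower a (- t).
Proof.
  intros Ht Ha; rewrite <- (Rpower_1_l (- t)); apply Rpower_opp_le; lra.
Qed.

Definition psi (t L y : R) : R :=
  if Rle_dec y L then 1 else Rpower ((y - 1) / (L - 1)) (- t).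

Section Psi.
Variables t L : R.
Hypothesis Ht : 0 <= t.
Hypothesis HL : 1 < L.

Lemma psi_pos y : 0 < psi t L y.
Proof. unfold psi; destruct (Rle_dec y L); [lra | apply Rpower_pos]. Qed.

Lemma psi_le_1 y : psi t L y <= 1.
Proof.
  unfold psi; destruct (Rle_dec y L); [lra|].
  apply Rpower_opp_le_1; [exact Ht|]; apply Rle_div_r; lra.
Qed.

Lemma psi_le_Rpower y : 1 < y -> psi t L y <= Rpower ((y - 1) / (L - 1)) (- t).
Proof.
  intros Hy; unfold psi; destruct (Rle_dec y L); [|lra].
  apply Rpower_opp_ge_1; [exact Ht|].
  split; [apply Rdiv_lt_0_compat; lra | apply Rle_div_l; lra].
Qed.

Lemma psi_small : 0 < t -> forall eps, 0 < eps ->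
  exists M, L <= M /\ forall y, M < y -> psi t L y <= eps.
Proof.
  intros Ht0 eps Heps.
  set (v := Rpower eps (- / t)).
  assert (Hv : 0 < v) by apply Rpower_pos.
  exists (L + (L - 1) * v); split; [nra|]; intros y Hy.
  eapply Rle_trans; [apply psi_le_Rpower; nra|].
  replace eps with (Rpower v (- t))
    by (unfold v; rewrite Rpower_mult; replace (- / t * - t) with 1 by (field; lra);
        apply Rpower_1; exact Heps).
  apply Rpower_opp_le; [exact Ht|]; split; [exact Hv|].
  apply Rle_div_r; nra.
Qed.

Section Supersolution.
Variables p d : R.
Hypothesis Hp : 0 <= p <= 1.
Hypothesis Hd : 0 < d.
Hypothesis HLd : 1 <= 2 * d * (L - 2).
Hypothesis Hgrowth : p * Rpower 2 t + (1 - p) * Rpower ((1 + d) / 2) t <= 1.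

(* Writing P = psi y for y > L, a win multiplies (y - 1) by 1/2 and so P by at most
   2^t, while a loss multiplies (y - 1) by at least 2 / (1 + d) since 2 d (y - 2) >= 1. *)
Lemma psi_step_le y : step p (psi t L) y <= psi t L y.
Proof.
  unfold step.
  pose proof (psi_le_1 ((y + 1) / 2)); pose proof (psi_le_1 (2 * y - 2)).
  pose proof (psi_pos ((y + 1) / 2)); pose proof (psi_pos (2 * y - 2)).
  unfold psi at 3; destruct (Rle_dec y L) as [HyL|HyL]; [nra|].
  assert (HL2 : 2 < L) by nra.
  set (u := (y - 1) / (L - 1)).
  assert (Hu : 0 < u) by (apply Rdiv_lt_0_compat; lra).
  assert (Hwin : psi t L ((y + 1) / 2) <= Rpower u (- t) * Rpower 2 t).
  { rewrite <- Rpower_div_opp by lra.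
    eapply Rle_trans; [apply psi_le_Rpower; lra|].
    unfold u; replace (((y + 1) / 2 - 1) / (L - 1)) with ((y - 1) / (L - 1) / 2)
      by (field; lra); lra. }
  assert (Hloss : psi t L (2 * y - 2) <= Rpower u (- t) * Rpower ((1 + d) / 2) t).
  { rewrite <- Rpower_div_opp by lra.
    eapply Rle_trans; [apply psi_le_Rpower; lra|].
    apply Rpower_opp_le; [exact Ht|]; split; [apply Rdiv_lt_0_compat; lra|].
    unfold u; replace ((y - 1) / (L - 1) / ((1 + d) / 2))
      with (2 * (y - 1) / (1 + d) / (L - 1)) by (field; lra).
    unfold Rdiv at 1 3; apply Rmult_le_compat_r; [apply Rlt_le, Rinv_0_lt_compat; lra|].
    apply Rle_div_l; nra. }
  pose proof (Rpower_pos u (- t)); nra.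
Qed.

End Supersolution.
End Psi.

Lemma exists_psi_supersolution pb : 0 <= pb < 1 / 2 ->
  exists t L0, 0 < t /\ 2 < L0 /\
    forall L p y, L0 <= L -> 0 <= p <= pb -> step p (psi t L) y <= psi t L y.
Proof.
  intros Hpb.
  set (e := 1 / 2 - pb); set (q := 1 + e); set (d := e * e).
  assert (He : 0 < e <= 1 / 2) by (unfold e; lra).
  assert (Hln2 : 0 < ln 2) by (rewrite <- ln_1; apply ln_increasing; lra).
  assert (Hlnq : 0 < ln q) by (rewrite <- ln_1; apply ln_increasing; unfold q; lra).
  assert (Hlnq2 : ln q <= ln 2) by (apply ln_le; unfold q; lra).
  set (t := ln q / ln 2).
  assert (Ht : 0 < t <= 1) by (split; [apply Rdiv_lt_0_compat | apply Rle_div_l]; lra).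
  assert (Hq : Rpower 2 t = q).
  { unfold Rpower, t; replace (ln q / ln 2 * ln 2) with (ln q) by (field; lra).
    apply exp_ln; unfold q; lra. }
  assert (Hd : 0 < d) by (unfold d; nra).
  assert (Hinv : 2 * d * / (2 * d) = 1) by (field; lra).
  assert (Hinv_pos : 0 < / (2 * d)) by (apply Rinv_0_lt_compat; lra).
  exists t, (2 + / (2 * d)); split; [lra|]; split; [lra|].
  intros L p y HL Hp.
  apply (psi_step_le t L ltac:(lra) ltac:(lra) p d); [lra | exact Hd | nra |].
  rewrite Rpower_div, Hq by lra.
  assert (Hd1 : Rpower (1 + d) t <= 1 + d).
  { rewrite <- (Rpower_1 (1 + d)) at 2 by lra; apply Rle_Rpower; lra. }
  assert (Hgap : 0 <= e * (pb - p)) by (apply Rmult_le_pos; lra).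
  (* p q^2 + (1 - p) (1 + d) - q = - 2 e (pb - p) - e^2 *)
  assert (Hkey : p * q * q + (1 - p) * (1 + d) <= q).
  { unfold q, d; unfold e in *; nra. }
  apply Rmult_le_reg_r with q; [unfold q; lra|].
  replace ((p * q + (1 - p) * (Rpower (1 + d) t / q)) * q)
    with (p * q * q + (1 - p) * Rpower (1 + d) t) by (field; unfold q; lra).
  nra.
Qed.

Definition in_window (M x : R) : R :=
  if Rle_dec x 2 then 0 else if Rle_dec x M then 1 else 0.

Fixpoint stay (p M : R) (n : nat) (x : R) : R :=
  match n with
  | O => in_window M x
  | S m => in_window M x * step p (stay p M m) x
  end.

Lemma in_window_outside M x : x <= 2 \/ M < x -> in_window M x = 0.
Proof. intros Hx; unfold in_window; destruct (Rle_dec x 2), (Rle_dec x M); lra. Qed.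

Lemma in_window_cases M x : in_window M x = 0 \/ in_window M x = 1.
Proof. unfold in_window; destruct (Rle_dec x 2), (Rle_dec x M); auto. Qed.

Section Stay.
Variables p M : R.
Hypothesis Hp : 0 <= p <= 1.

Lemma stay_outside n x : x <= 2 \/ M < x -> stay p M n x = 0.
Proof. intros Hx; destruct n; cbn [stay]; rewrite in_window_outside by exact Hx; ring. Qed.

Lemma stay_bounds n x : 0 <= stay p M n x <= 1.
Proof.
  revert x; induction n as [|n IH]; intros x; cbn [stay].
  - destruct (in_window_cases M x) as [-> | ->]; lra.
  - pose proof (iter_step_bounds p Hp 1 (stay p M n) x IH).
    destruct (in_window_cases M x) as [-> | ->]; cbn in *; lra.
Qed.

Lemma stay_le_S n x : stay p M (S n) x <= stay p M n x.
Proof.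
  revert x; induction n as [|n IH]; intros x.
  - cbn [stay]; pose proof (iter_step_bounds p Hp 1 (stay p M 0) x (stay_bounds 0)).
    destruct (in_window_cases M x) as [-> | ->]; cbn in *; lra.
  - change (stay p M (S (S n)) x) with (in_window M x * step p (stay p M (S n)) x).
    change (stay p M (S n) x) with (in_window M x * step p (stay p M n) x).
    pose proof (step_le p Hp _ _ x IH).
    destruct (in_window_cases M x) as [-> | ->]; lra.
Qed.

Lemma stay_antitone n m x : (n <= m)%nat -> stay p M m x <= stay p M n x.
Proof.
  induction 1 as [|m Hnm IH]; [lra|].
  eapply Rle_trans; [apply stay_le_S | exact IH].
Qed.

(* k consecutive wins take any x with x - 1 <= 2^k down to (-oo, 2]. *)
Lemma stay_decay N B : (forall y, stay p M N y <= B) ->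
  forall k x, x - 1 <= 2 ^ k -> stay p M (N + k) x <= (1 - p ^ k) * B.
Proof.
  intros HN k; induction k as [|k IH]; intros x Hx.
  - rewrite stay_outside by (simpl in Hx; lra); simpl; lra.
  - assert (HB : 0 <= B) by (pose proof (stay_bounds N 0); pose proof (HN 0); lra).
    assert (Hpk : 0 <= p ^ k <= 1).
    { split; [apply pow_le; lra | rewrite <- (pow1 k); apply pow_incr; lra]. }
    pose proof (IH ((x + 1) / 2) ltac:(simpl in Hx; lra)).
    pose proof (stay_antitone N (N + k) (2 * x - 2) ltac:(lia)).
    pose proof (HN (2 * x - 2)).
    assert (0 <= (1 - p * p ^ k) * B) by (apply Rmult_le_pos; nra).
    rewrite Nat.add_succ_r; cbn [stay pow]; unfold step.
    destruct (in_window_cases M x) as [-> | ->]; nra.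
Qed.

Lemma stay_geom k : M - 1 <= 2 ^ k -> forall j x, stay p M (j * k) x <= (1 - p ^ k) ^ j.
Proof.
  intros Hk j; induction j as [|j IH]; intros x; [apply stay_bounds|].
  assert (Hpk : 0 <= p ^ k <= 1).
  { split; [apply pow_le; lra | rewrite <- (pow1 k); apply pow_incr; lra]. }
  rewrite Nat.mul_succ_l; destruct (Rle_dec x M).
  - cbn [pow]; apply stay_decay; [exact IH | lra].
  - rewrite stay_outside by lra; apply pow_le; lra.
Qed.

End Stay.

Section Tail.
Variable p : R.
Hypothesis Hp : 0 <= p <= 1.

Lemma f_approx_le_psi t L m y : 2 < L ->
  (forall z, step p (psi t L) z <= psi t L z) -> f_approx m y p <= psi t L y.
Proof.
  intros HL Hsuper; rewrite f_approx_iter0; apply iter_step_le_super; [exact Hp| |exact Hsuper].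
  intros z; cbn [f_approx]; pose proof (psi_pos t L z).
  destruct (Rle_dec z 2); [unfold psi; destruct (Rle_dec z L)|]; lra.
Qed.

Lemma window_iter_le_psi t M n y :
  (forall z, step p (psi t M) z <= psi t M z) -> iter_step p n (in_window M) y <= psi t M y.
Proof.
  intros Hsuper; apply iter_step_le_super; [exact Hp| |exact Hsuper].
  intros z; pose proof (psi_pos t M z).
  unfold in_window, psi in *; destruct (Rle_dec z 2), (Rle_dec z M); lra.
Qed.

Lemma f_approx_tail_le m M eps : 0 <= eps -> (forall y, M < y -> f_approx m y p <= eps) ->
  forall N x, f_approx (N + m) x p - f_approx N x p <= iter_step p N (in_window M) x + eps.
Proof.
  intros He Hm N x; rewrite f_approx_iter, (f_approx_iter0 N).
  assert (H : forall y, f_approx m y p <= f_approx 0 y p + (in_window M y + eps)).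
  { intros y; cbn [f_approx]; unfold in_window.
    destruct (Rle_dec y 2) as [Hy|Hy]; [rewrite f_approx_low by exact Hy; lra|].
    pose proof (f_approx_bounds m y p Hp).
    destruct (Rle_dec y M); [lra | specialize (Hm y); lra]. }
  pose proof (iter_step_le p Hp N _ _ x H) as Hle.
  rewrite !iter_step_plus, iter_step_const in Hle; lra.
Qed.

Lemma window_iter_le_stay M M' eps : M <= M' -> 0 <= eps ->
  (forall n y, M' < y -> iter_step p n (in_window M) y <= eps) ->
  forall N x, iter_step p N (in_window M) x <= stay p M' N x + eps.
Proof.
  intros HM He Hfar N; induction N as [|N IH]; intros x.
  - cbn [iter_step stay]; unfold in_window.
    destruct (Rle_dec x 2), (Rle_dec x M), (Rle_dec x M'); lra.
  - pose proof (stay_bounds p M' Hp (S N) x).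
    destruct (Rle_dec x 2) as [Hx|Hx].
    + rewrite (iter_step_low p (S N) _ 0) by (auto; intros; apply in_window_outside; lra).
      lra.
    + destruct (Rle_dec x M') as [HxM|HxM]; [| specialize (Hfar (S N) x); lra].
      cbn [iter_step stay]; unfold in_window at 2.
      destruct (Rle_dec x 2); [lra|]; destruct (Rle_dec x M'); [|lra].
      rewrite Rmult_1_l, <- step_plus_const; apply step_le; [exact Hp | exact IH].
Qed.
End Tail.

Lemma exists_pow2_ge b : exists k, b <= 2 ^ k.
Proof.
  destruct (Pow_x_infinity 2 ltac:(rewrite Rabs_pos_eq; lra) b) as [k Hk].
  exists k; specialize (Hk k (le_n k)).
  rewrite Rabs_pos_eq in Hk by (apply pow_le; lra); lra.
Qed.

Lemma f_approx_tail_uniform pa pb : 0 < pa <= pb -> pb < 1 / 2 ->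
  forall eps, 0 < eps -> exists N0, forall N m x p, (N0 <= N)%nat -> pa <= p <= pb ->
    f_approx (N + m) x p - f_approx N x p <= eps.
Proof.
  intros Hpa Hpb eps He.
  destruct (exists_psi_supersolution pb ltac:(lra)) as (t & L0 & Ht & HL0 & Hsuper).
  destruct (psi_small t L0 ltac:(lra) ltac:(lra) Ht (eps / 3) ltac:(lra)) as (M & HM & HfarM).
  destruct (psi_small t M ltac:(lra) ltac:(lra) Ht (eps / 3) ltac:(lra))
    as (M' & HM' & HfarM').
  destruct (exists_pow2_ge (M' - 1)) as [k Hk].
  assert (Hpak : 0 < pa ^ k <= 1).
  { split; [apply pow_lt; lra | rewrite <- (pow1 k); apply pow_incr; lra]. }
  destruct (pow_lt_1_zero (1 - pa ^ k) ltac:(rewrite Rabs_pos_eq; lra) (eps / 3)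
    ltac:(lra)) as [j Hj].
  exists (j * k)%nat; intros N m x p HN Hp.
  assert (Hp01 : 0 <= p <= 1) by lra.
  assert (Hf : forall y, M < y -> f_approx m y p <= eps / 3).
  { intros y Hy; eapply Rle_trans; [|apply HfarM, Hy].
    apply (f_approx_le_psi p Hp01); [lra | intros z; apply Hsuper; lra]. }
  assert (Hw : forall n y, M' < y -> iter_step p n (in_window M) y <= eps / 3).
  { intros n y Hy; eapply Rle_trans; [|apply HfarM', Hy].
    apply (window_iter_le_psi p Hp01); intros z; apply Hsuper; lra. }
  assert (Hs : stay p M' N x <= (1 - pa ^ k) ^ j).
  { assert (Hpk : pa ^ k <= p ^ k <= 1).
    { split; [apply pow_incr | rewrite <- (pow1 k); apply pow_incr]; lra. }
    eapply Rle_trans; [apply (stay_antitone p M' Hp01 _ _ x HN)|].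
    eapply Rle_trans; [apply (stay_geom p M' Hp01 k Hk)|].
    apply pow_incr; lra. }
  pose proof (f_approx_tail_le p Hp01 m M (eps / 3) ltac:(lra) Hf N x).
  pose proof (window_iter_le_stay p Hp01 M M' (eps / 3) HM' ltac:(lra) Hw N x).
  specialize (Hj j (le_n j)); pose proof (Rle_abs ((1 - pa ^ k) ^ j)); lra.
Qed.

Lemma f_approx_cvg_uniform pa pb : 0 < pa -> pb < 1 / 2 -> forall eps, 0 < eps ->
  exists N0, forall N x p, (N0 <= N)%nat -> pa <= p <= pb ->
    Rabs (f_approx N x p - ruin_f x p) < eps.
Proof.
  intros Hpa Hpb eps He.
  destruct (Rle_dec pa pb) as [Hab|Hab]; [| exists 0%nat; intros; lra].
  destruct (f_approx_tail_uniform pa pb ltac:(lra) Hpb (eps / 2) ltac:(lra)) as [N0 HN0].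
  exists N0; intros N x p HN Hp.
  assert (Hp01 : 0 < p < 1) by lra.
  assert (Hle : ruin_f x p <= f_approx N x p + eps / 2).
  { pose proof (proj1 (is_lim_seq_incr_n _ N _) (f_approx_cvg p Hp01 x)) as Hlim.
    refine (is_lim_seq_le _ _ _ _ _ Hlim (is_lim_seq_const _)).
    intros m; rewrite Nat.add_comm; specialize (HN0 N m x p HN Hp); lra. }
  pose proof (f_approx_le_ruin_f p Hp01 N x).
  rewrite Rabs_left1 by lra; lra.
Qed.

Theorem proposition1p3 :
  (* for every x > 2: f_n(x,.) -> f(x,.) locally uniformly on (0,1/2) *)
  (forall x : R, 2 < x ->
     forall a b : R, 0 < a -> b < 1 / 2 ->
     forall eps : R, 0 < eps ->
     exists N : nat, forall n : nat, (N <= n)%nat ->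
       forall p : R, a <= p <= b -> Rabs (f_approx n x p - ruin_f x p) < eps) /\
  (* for every p in (0,1/2): f_n(.,p) -> f(.,p) locally uniformly on (2,oo) *)
  (forall p : R, 0 < p < 1 / 2 ->
     forall a b : R, 2 < a ->
     forall eps : R, 0 < eps ->
     exists N : nat, forall n : nat, (N <= n)%nat ->
       forall x : R, a <= x <= b -> Rabs (f_approx n x p - ruin_f x p) < eps) /\
  (* the functional equation *)
  (forall x p : R, 2 < x -> 0 < p < 1 / 2 ->
     ruin_f x p = p * ruin_f ((x + 1) / 2) p + (1 - p) * ruin_f (2 * x - 2) p).
Proof.
  split; [|split].
  - intros x _ a b Ha Hb eps He.
    destruct (f_approx_cvg_uniform a b Ha Hb eps He) as [N HN].
    exists N; intros n Hn p Hp; apply HN; assumption.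
  - intros p Hp a b _ eps He.
    destruct (f_approx_cvg_uniform p p ltac:(lra) ltac:(lra) eps He) as [N HN].
    exists N; intros n Hn x _; apply HN; [assumption | lra].
  - intros x p _ Hp; apply ruin_f_step; lra.
Qed.
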